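(* Suppose that there exists a ${}^\lambda\mathrm{H}_t(m,n;s,k)$ and set $v=\frac{2nk}{\lambda}+t$. If either $v$ is odd, or $v$ and $t$ are both even, then $\lambda$ divides $nk$.
   Context: Let $m,n,s,k,\lambda,t$ be positive integers with $t$ dividing $\frac{2nk}{\lambda}$, let $v=\frac{2nk}{\lambda}+t$ and let $J$ be the subgroup of $\mathbb{Z}_v$ of order $t$. A $\lambda$-fold Heffter array ${}^\lambda\mathrm{H}_t(m,n;s,k)$ is an $m\times n$ partially filled array with entries in $\mathbb{Z}_v$ such that: (a) each row has exactly $s$ and each column exactly $k$ filled cells; (b) the multiset $\{\pm x: x$ an entry of a filled cell$\}$ (counted over all filled cells) contains each element of $\mathbb{Z}_v\setminus J$ exactly $\lambda$ times and no element of $J$; (c) every row and every column sums to $0$ in $\mathbb{Z}_v$. *)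

From mathcomp Require Import all_boot.
Unset Printing Implicit Defensive.

(* Elements of Z_v are represented by their canonical representatives in
   [0, v) (nat); arithmetic is taken modulo v. A partially filled m x n array
   is a function A : 'I_m -> 'I_n -> option nat (None = empty cell). *)

Definition heffter_v (n k lam t : nat) : nat := (2 * n * k) %/ lam + t.

(* the subgroup J of Z_v of order t (t | v): the multiples of v/t *)
Definition inJ (v t y : nat) : bool := (v %/ t) %| y.

(* number of occurrences of y (in Z_v) in the multiset {+-x : x a filled entry} *)
Definition pm_count (m n v : nat) (A : 'I_m -> 'I_n -> option nat) (y : nat) : nat :=
  \sum_(i < m) \sum_(j < n)
     match A i j with
     | Some x => ((x %% v) == y) + (((v - x) %% v) == y)
     | None => 0
     end.

Definition entry (m n : nat) (A : 'I_m -> 'I_n -> option nat) i j : nat :=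
  if A i j is Some x then x else 0.

(* lambda-fold Heffter array ^lambda H_t(m,n;s,k), including the standing
   assumptions lambda | 2nk (so that v is an integer) and t | 2nk/lambda. *)
Definition is_heffter (m n s k lam t : nat) (A : 'I_m -> 'I_n -> option nat) : Prop :=
  let v := heffter_v n k lam t in
  [/\ lam %| 2 * n * k, t %| (2 * n * k) %/ lam,
      (forall i j x, A i j = Some x -> x < v) &
  [/\
      (forall i : 'I_m, #|[set j : 'I_n | A i j != None]| = s),
      (forall j : 'I_n, #|[set i : 'I_m | A i j != None]| = k),
      (forall y, y < v -> pm_count m n v A y = if inJ v t y then 0 else lam),
      (forall i : 'I_m, (\sum_(j < n) entry m n A i j) %% v = 0) &
      (forall j : 'I_n, (\sum_(i < m) entry m n A i j) %% v = 0)]].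

From mathcomp Require Import all_boot.

(* Write N = 2nk/lambda, so that v = N + t, 2nk = N * lambda
   and t | N (both are part of the definition of a Heffter array).
   The whole proposition reduces to showing that N is even: then
   nk = (N/2) * lambda.  Evenness of N follows from the parity hypothesis:
   - if v = N + t is odd, write N = c t; then v = (c + 1) t is odd, so
     c + 1 is odd, c is even and hence N = c t is even;
   - if v and t are both even, then N = v - t is even. *)

Lemma even_of_multiple_parity {N t : nat} :
  t %| N -> odd (N + t) || (~~ odd (N + t) && ~~ odd t) -> ~~ odd N.
Proof.
case/dvdnP=> c ->; rewrite oddD !oddM.
by case: (odd c); case: (odd t).
Qed.

Lemma dvdn_of_even_cofactor {x N lam : nat} :
  2 * x = N * lam -> ~~ odd N -> lam %| x.
Proof.
move=> eN evenN; apply/dvdnP; exists N./2.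
have N_double : N = (N./2).*2 by rewrite -[LHS]odd_double_half (negbTE evenN).
apply/eqP; rewrite -(eqn_pmul2l (isT : 0 < 2)) eN {1}N_double.
by rewrite -mul2n mulnA.
Qed.

Theorem proposition4p1 (m n s k lam t : nat) (A : 'I_m -> 'I_n -> option nat) :
  0 < m -> 0 < n -> 0 < s -> 0 < k -> 0 < lam -> 0 < t ->
  is_heffter m n s k lam t A ->
  (odd (heffter_v n k lam t) || (~~ odd (heffter_v n k lam t) && ~~ odd t)) ->
  lam %| n * k.
Proof.
move=> _ _ _ _ _ _ [lam_dvd t_dvd _ _]; rewrite /heffter_v => parity.
have evenN : ~~ odd ((2 * n * k) %/ lam) := even_of_multiple_parity t_dvd parity.
apply: (dvdn_of_even_cofactor _ evenN).
by rewrite mulnA divnK.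
Qed.
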